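(* Let $R$ be a semi-local ring containing $\mathbb Q$ and let $m\ge1$. For every $n\ge0$ the map $$\theta^n_{R_m}\colon tR_m\otimes_R\Omega^n_R\to\frac{\widetilde\Omega^n_{R_m}}{d\,\widetilde\Omega^{n-1}_{R_m}},\qquad t^i\otimes\omega\mapsto\text{class of }t^i\omega,$$ is surjective.
   Context: $R_m=R[t]/(t^{m+1})$, $tR_m$ the ideal generated by $t$. $\Omega^n_A$ denotes absolute Kähler differentials ($=\Omega^n_{A/\mathbb Q}$), $\widetilde\Omega^n_{R_m}=\ker(\Omega^n_{R_m}\to\Omega^n_R)$ (induced by $t\mapsto0$), with $\widetilde\Omega^{-1}_{R_m}=0$. *)

From HB Require Import structures.
From mathcomp Require Import all_boot all_order all_algebra.
From mathcomp Require Import ring_quotient generic_quotient.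
Unset Printing Implicit Defensive.
Import GRing.Theory.
Local Open Scope ring_scope.
Local Open Scope quotient_scope.

(* the ideal (t^(m+1)) of R[t]: polynomials whose coefficients of degree <= m vanish *)
Definition trunc_ideal (R : comNzRingType) (m : nat) : pred {poly R} :=
  fun p => [forall i : 'I_m.+1, p`_i == 0].

Arguments trunc_ideal : clear implicits.

Lemma trunc_ideal_closed (R : comNzRingType) (m : nat) :
  idealr_closed (trunc_ideal R m).
Proof.
split.
- by apply/forallP => i; rewrite coef0.
- apply/negP => /forallP /(_ ord0); by rewrite coefC eqxx oner_eq0.
- move=> a u v /forallP Hu /forallP Hv; apply/forallP => i.
  rewrite coefD coefM (eqP (Hv i)) addr0 big1 // => j _.
  have Hji : (i - j < m.+1)%N.
    by apply: leq_ltn_trans (leq_subr _ _) (ltn_ord i).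
  by rewrite (eqP (Hu (Ordinal Hji))) mulr0.
Qed.

Definition trunc_idealr (R : comNzRingType) (m : nat) : idealr {poly R} :=
  HB.pack (trunc_ideal R m)
    (GRing.isZmodClosed.Build _ (trunc_ideal R m)
       (idealr_closedB (trunc_ideal_closed R m)))
    (isProperIdeal.Build _ (trunc_ideal R m)
       (idealr_closed_nontrivial (trunc_ideal_closed R m))).

Definition Rtrunc (R : comNzRingType) (m : nat) : comNzRingType :=
  {ideal_quot (trunc_idealr R m)}.

Definition tvar (R : comNzRingType) (m : nat) : Rtrunc R m :=
  \pi_(Rtrunc R m) 'X.

Definition incl (R : comNzRingType) (m : nat) (r : R) : Rtrunc R m :=
  \pi_(Rtrunc R m) r%:P.

(* the map R_m -> R induced by t |-> 0 (well defined since elements of the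
   ideal have zero constant coefficient) *)
Definition ev0 (R : comNzRingType) (m : nat) (x : Rtrunc R m) : R :=
  (repr x)`_0.

Set Implicit Arguments.
Unset Strict Implicit.

(* A formal expression  sum_k a_k da_{k,1} /\ ... /\ da_{k,n}  in the free
   A-module on n-tuples of elements of A. *)
Definition kform (A : comNzRingType) (n : nat) := seq (A * n.-tuple A).

Definition fcoef (A : comNzRingType) n (s : kform A n) (w : n.-tuple A) : A :=
  \sum_(p <- s | p.2 == w) p.1.

Definition fscale (A : comNzRingType) n (c : A) (s : kform A n) : kform A n :=
  [seq (c * p.1, p.2) | p <- s].

Definition fopp (A : comNzRingType) n (s : kform A n) : kform A n :=
  fscale (-1) s.

Definition fsub (A : comNzRingType) n (s s' : kform A n) : kform A n :=
  s ++ fopp s'.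

Definition tset (A : comNzRingType) n (w : n.-tuple A) (i : 'I_n) (a : A)
  : n.-tuple A := [tuple of [seq if j == i then a else w`_j | j <- ord_tuple n]].

(* Defining relations of Omega^n_{A/Z} = Lambda^n_A Omega^1_{A/Z}
   (multi-additivity, Leibniz rule in each slot, alternation). *)
Inductive omega_rel (A : comNzRingType) (n : nat) : kform A n -> Prop :=
| orel_add (w : n.-tuple A) (i : 'I_n) (a b : A) :
    omega_rel [:: (1, tset w i (a + b)); (-1, tset w i a); (-1, tset w i b)]
| orel_leib (w : n.-tuple A) (i : 'I_n) (a b : A) :
    omega_rel [:: (1, tset w i (a * b)); (- a, tset w i b); (- b, tset w i a)]
| orel_alt (w : n.-tuple A) (i j : 'I_n) :
    i != j -> tnth w i = tnth w j -> omega_rel [:: (1, w)].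

(* the submodule of relations: [omega_null s] means that s represents 0 in
   Omega^n_A *)
Inductive omega_null (A : comNzRingType) (n : nat) : kform A n -> Prop :=
| onull_nil : omega_null [::]
| onull_rel s : omega_rel s -> omega_null s
| onull_add s s' : omega_null s -> omega_null s' -> omega_null (s ++ s')
| onull_scale (c : A) s : omega_null s -> omega_null (fscale c s)
| onull_ext s s' : omega_null s -> fcoef s =1 fcoef s' -> omega_null s'.

Definition fmap (A B : comNzRingType) n (f : A -> B) (s : kform A n) : kform B n :=
  [seq (f p.1, map_tuple f p.2) | p <- s].

Definition fd (A : comNzRingType) k (s : kform A k) : kform A k.+1 :=
  [seq (1, cons_tuple p.1 p.2) | p <- s].

(* x represents an element of  Omega~^n_{R_m} = ker(Omega^n_{R_m} -> Omega^n_R) *)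
Definition in_tilde (R : comNzRingType) (m n : nat) (x : kform (Rtrunc R m) n)
  : Prop := omega_null (fmap (@ev0 R m) x).

(* z represents an element of  d Omega~^{n-1}_{R_m}  (with Omega~^{-1} = 0) *)
Definition in_dtilde (R : comNzRingType) (m n : nat) :
  kform (Rtrunc R m) n -> Prop :=
  match n with
  | 0 => fun z => omega_null z
  | k.+1 => fun z => exists y : kform (Rtrunc R m) k,
              in_tilde y /\ omega_null (fsub z (fd y))
  end.

(* theta_map applied to  sum_j t^(i_j) (x) omega_j :  sum_j t^(i_j) omega_j *)
Definition theta_map (R : comNzRingType) (m n : nat)
  (ws : seq (nat * kform R n)) : kform (Rtrunc R m) n :=
  flatten [seq fscale (tvar R m ^+ p.1) (fmap (@incl R m) p.2) | p <- ws].

Definition is_ideal (R : comNzRingType) (I : R -> Prop) : Prop :=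
  [/\ I 0, (forall x y, I x -> I y -> I (x + y)) & (forall a x, I x -> I (a * x))].

Definition is_maximal_ideal (R : comNzRingType) (I : R -> Prop) : Prop :=
  [/\ is_ideal I, ~ I 1 &
      forall J : R -> Prop, is_ideal J -> ~ J 1 -> (forall x, I x -> J x) ->
        forall x, J x -> I x].

Definition semilocal (R : comNzRingType) : Prop :=
  exists (k : nat) (M : 'I_k -> R -> Prop),
    forall I, is_maximal_ideal I -> exists i, forall x, I x <-> M i x.

Definition contains_Q (R : comNzRingType) : Prop :=
  forall n : nat, exists y : R, (n.+1)%:R * y = 1.

(* Every element of Omega^n_{R_m} is a sum of terms t^k a db_1 /\ ... /\ db_n.
   Writing a and the b_i as r + t b' with r in R, and using
   d(r + t b') = dr + b' dt + t db', such a term is, modulo terms with a higher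
   power of t, a sum of terms t^k r dr_1 /\ ... /\ dr_n and
   t^k r dt /\ dr_2 /\ ... /\ dr_n with r, r_i in R (as dt /\ dt = 0).  A term of
   the first kind is theta(t^k (x) r dr_1 /\ ... /\ dr_n) if 1 <= k <= m, lies in
   Omega^n_R if k = 0 and vanishes if k > m.  For the second kind, k + 1 is
   invertible and t^k dt = d(t^(k+1) / (k+1)), which makes the term exact modulo
   the image of theta.  Hence every x is w + theta(xi) + d eta with w in
   Omega^n_R and eta with coefficients in tR_m; when x is in Omega~^n, setting
   t = 0 shows w = 0. *)

From HB Require Import structures.
From mathcomp Require Import all_boot all_algebra.
From mathcomp Require Import ring_quotient generic_quotient ring.

Set Implicit Arguments. Unset Strict Implicit. Unset Printing Implicit Defensive.
Import GRing.Theory.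
Local Open Scope ring_scope.
Local Open Scope quotient_scope.

Section FormalSums.
Variables (A : comNzRingType) (n : nat).
Implicit Types (s x y z : kform A n) (w : n.-tuple A).

Lemma fcoef_nil w : fcoef ([::] : kform A n) w = 0.
Proof. by rewrite /fcoef big_nil. Qed.

Lemma fcoef_cons (p : A * n.-tuple A) s w :
  fcoef (p :: s) w = (if p.2 == w then p.1 else 0) + fcoef s w.
Proof. by rewrite /fcoef big_cons; case: ifP; rewrite ?add0r. Qed.

Lemma fcoef_cat s s' w : fcoef (s ++ s') w = fcoef s w + fcoef s' w.
Proof. by rewrite /fcoef big_cat. Qed.

Lemma fcoef_scale c s w : fcoef (fscale c s) w = c * fcoef s w.
Proof. by rewrite /fcoef /fscale big_map mulr_sumr. Qed.

Lemma fcoef_sub s s' w : fcoef (fsub s s') w = fcoef s w - fcoef s' w.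
Proof. by rewrite /fsub fcoef_cat /fopp fcoef_scale mulN1r. Qed.

Lemma omega_null_fcoef0 x : fcoef x =1 (fun=> 0) -> omega_null x.
Proof. by move=> x0; apply: (onull_ext (@onull_nil A n)) => w; rewrite x0 fcoef_nil. Qed.

Lemma omega_null_lin2 s1 s2 c1 c2 x : omega_null s1 -> omega_null s2 ->
  (forall w, fcoef x w = c1 * fcoef s1 w + c2 * fcoef s2 w) -> omega_null x.
Proof.
move=> s1_0 s2_0 ex.
apply: onull_ext (onull_add (onull_scale c1 s1_0) (onull_scale c2 s2_0)) _ => w.
by rewrite ex fcoef_cat !fcoef_scale.
Qed.

Lemma omega_null_lin3 s1 s2 s3 c1 c2 c3 x :
  omega_null s1 -> omega_null s2 -> omega_null s3 ->
  (forall w, fcoef x w = c1 * fcoef s1 w + c2 * fcoef s2 w + c3 * fcoef s3 w) ->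
  omega_null x.
Proof.
move=> s1_0 s2_0 s3_0 ex; apply: (omega_null_lin2 (c1 := 1) (c2 := c3)
  (onull_add (onull_scale c1 s1_0) (onull_scale c2 s2_0)) s3_0) => w.
by rewrite ex fcoef_cat !fcoef_scale mul1r.
Qed.

Definition omega_eqv x y := omega_null (fsub x y).

Lemma omega_eqv_fcoef x y : fcoef x =1 fcoef y -> omega_eqv x y.
Proof. by move=> exy; apply: omega_null_fcoef0 => w; rewrite fcoef_sub exy subrr. Qed.

Lemma omega_eqv_refl x : omega_eqv x x.
Proof. exact: omega_eqv_fcoef. Qed.

Lemma omega_eqv_trans y x z : omega_eqv x y -> omega_eqv y z -> omega_eqv x z.
Proof.
move=> xy yz; apply: (omega_null_lin2 (c1 := 1) (c2 := 1) xy yz) => w.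
by rewrite !fcoef_sub !mul1r addrA subrK.
Qed.

Lemma omega_eqv_cat x x' y y' :
  omega_eqv x y -> omega_eqv x' y' -> omega_eqv (x ++ x') (y ++ y').
Proof.
move=> xy xy'; apply: (omega_null_lin2 (c1 := 1) (c2 := 1) xy xy') => w.
by rewrite !fcoef_sub !fcoef_cat !mul1r addrACA opprD.
Qed.

Lemma omega_eqv_null x y : omega_eqv x y -> omega_null y -> omega_null x.
Proof.
move=> xy y0; apply: (omega_null_lin2 (c1 := 1) (c2 := 1) xy y0) => w.
by rewrite !fcoef_sub !mul1r subrK.
Qed.

Lemma omega_eqv_nil x : omega_null x -> omega_eqv x [::].
Proof. by move=> x0; apply: onull_ext x0 _ => w; rewrite fcoef_sub fcoef_nil subr0. Qed.

End FormalSums.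

Ltac fcoef_ring :=
  rewrite ?fcoef_sub ?fcoef_cat ?fcoef_scale ?fcoef_cons ?fcoef_nil /=;
  repeat case: ifP => _; ring.

Section Relations.
Variables (A : comNzRingType) (n : nat).
Implicit Types (w : n.-tuple A) (i j : 'I_n) (a b c : A).

Lemma tnth_tset w i a j : tnth (tset w i a) j = if j == i then a else tnth w j.
Proof.
rewrite /tset (tnth_map _ (ord_tuple n)) tnth_ord_tuple.
by case: eqP => // _; rewrite (tnth_nth 0).
Qed.

Lemma tset_comm w i j a b : i != j ->
  tset (tset w j a) i b = tset (tset w i b) j a.
Proof.
move=> ij; apply: eq_from_tnth => k; rewrite !tnth_tset.
by case: (eqVneq k i) => [->|//]; rewrite (negbTE ij).
Qed.

Lemma tset_tnth w i : tset w i (tnth w i) = w.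
Proof. by apply: eq_from_tnth => k; rewrite tnth_tset; case: eqP => // ->. Qed.

Lemma omega_add c w i a b :
  omega_eqv [:: (c, tset w i (a + b))] [:: (c, tset w i a); (c, tset w i b)].
Proof.
have r := onull_rel (orel_add w i a b).
by apply: (omega_null_lin2 (c1 := c) (c2 := 0) r r) => v; fcoef_ring.
Qed.

Lemma omega_leibniz c w i a b :
  omega_eqv [:: (c, tset w i (a * b))] [:: (c * a, tset w i b); (c * b, tset w i a)].
Proof.
have r := onull_rel (orel_leib w i a b).
by apply: (omega_null_lin2 (c1 := c) (c2 := 0) r r) => v; fcoef_ring.
Qed.

Lemma omega_alt c w i j : i != j -> tnth w i = tnth w j -> omega_null [:: (c, w)].
Proof.
move=> ij wij; have r := onull_rel (orel_alt ij wij).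
by apply: (omega_null_lin2 (c1 := c) (c2 := 0) r r) => v; fcoef_ring.
Qed.

Lemma omega_coef0 w : omega_null [:: (0, w)].
Proof. by apply: omega_null_fcoef0 => v; fcoef_ring. Qed.

Lemma omega_d0 c w i : omega_null [:: (c, tset w i 0)].
Proof.
have r := omega_add c w i 0 0; rewrite addr0 in r.
by apply: (omega_null_lin2 (c1 := -1) (c2 := 0) r r) => v; fcoef_ring.
Qed.

Lemma omega_dexp c w i u k :
  omega_eqv [:: (c, tset w i (u ^+ k.+1))] [:: (k.+1%:R * u ^+ k * c, tset w i u)].
Proof.
elim: k c => [|k IHk] c.
  by apply: omega_eqv_fcoef => v; rewrite expr1 expr0 mulr1 mul1r.
have leib := omega_leibniz c w i u (u ^+ k.+1).
apply: (omega_null_lin2 (c1 := 1) (c2 := 1) leib (IHk (c * u))) => v.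
by rewrite !exprS; fcoef_ring.
Qed.

Definition tswap w i j := tset (tset w i (tnth w j)) j (tnth w i).

(* Expand the degenerate symbol with [a + b] in slots [i] and [j] by additivity. *)
Lemma omega_swap c w i j : i != j -> omega_eqv [:: (c, w)] [:: (- c, tswap w i j)].
Proof.
move=> ij; have ji : j != i by rewrite eq_sym.
set a := tnth w i; set b := tnth w j.
have alt_ij x : omega_null [:: (c, tset (tset w i x) j x)].
  by apply: (omega_alt _ ij); rewrite !tnth_tset !eqxx (negbTE ij).
have add_i := omega_add c (tset w j (a + b)) i a b.
rewrite !(tset_comm _ _ _ ij) in add_i.
have add_ja := omega_add c (tset w i a) j a b.
have add_jb := omega_add c (tset w i b) j a b.
have wab : tset (tset w i a) j b = w.
  by rewrite /a /b -(tset_comm _ _ _ ij) !tset_tnth.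
rewrite wab in add_ja.
have sum0 : omega_null [:: (c, w); (c, tswap w i j)].
  apply: (omega_null_lin2 (c1 := 1) (c2 := -1) (alt_ij (a + b))
    (onull_add (onull_add add_i (onull_add add_ja add_jb))
               (onull_add (alt_ij a) (alt_ij b)))) => v.
  by rewrite /tswap -/a -/b; fcoef_ring.
by apply: (omega_null_lin2 (c1 := 1) (c2 := 0) sum0 sum0) => v; fcoef_ring.
Qed.

End Relations.

Lemma tset_cons (A : comNzRingType) n (w : n.-tuple A) a b :
  tset (cons_tuple a w) ord0 b = cons_tuple b w.
Proof.
apply: eq_from_tnth => i; rewrite tnth_tset.
case: (unliftP ord0 i) => [j ->|->]; last by rewrite eqxx tnth0.
by rewrite eq_sym (negbTE (neq_lift _ _)) !tnthS.
Qed.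

Lemma map_cons_tuple (A B : Type) (f : A -> B) n a (w : n.-tuple A) :
  map_tuple f (cons_tuple a w) = cons_tuple (f a) (map_tuple f w).
Proof. exact: val_inj. Qed.

(* With [u = y t^(k+1)]: [t^k dt = du - t^(k+1) dy] and [c du = d(c u) - u dc]. *)
Lemma omega_integrate_dt (A : comNzRingType) n k (t c y : A) (W : n.-tuple A) :
  k.+1%:R * y = 1 ->
  omega_eqv [:: (t ^+ k * c, cons_tuple t W)]
    [:: (1, cons_tuple (c * (y * t ^+ k.+1)) W);
        (t ^+ k.+1 * - y, cons_tuple c W); (t ^+ k.+1 * - c, cons_tuple y W)].
Proof.
move=> ky1; set u := y * t ^+ k.+1.
have dcu := omega_leibniz 1 (cons_tuple t W) ord0 c u.
have du := omega_leibniz c (cons_tuple t W) ord0 y (t ^+ k.+1).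
have dt := omega_dexp (c * y) (cons_tuple t W) ord0 t k.
rewrite !tset_cons in dcu du dt.
have coef_dt : k.+1%:R * t ^+ k * (c * y) = t ^+ k * c.
  by transitivity (t ^+ k * c * (k.+1%:R * y)); [ring | rewrite ky1 mulr1].
rewrite coef_dt in dt.
apply: (omega_null_lin3 (c1 := -1) (c2 := -1) (c3 := -1) dcu du dt) => v.
by rewrite /u; fcoef_ring.
Qed.

Section Functoriality.
Variables (A B : comNzRingType) (f : {rmorphism A -> B}) (n : nat).
Implicit Types (s : kform A n) (w : n.-tuple A).

Lemma map_tset w i a : map_tuple f (tset w i a) = tset (map_tuple f w) i (f a).
Proof. by apply: eq_from_tnth => k; rewrite tnth_map !tnth_tset tnth_map; case: eqP. Qed.

Lemma fmap_cat s s' : fmap f (s ++ s') = fmap f s ++ fmap f s'.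
Proof. exact: map_cat. Qed.

Lemma fmap_scale c s : fmap f (fscale c s) = fscale (f c) (fmap f s).
Proof. by rewrite /fmap /fscale -!map_comp; apply: eq_map => p /=; rewrite rmorphM. Qed.

Lemma fmap_sub s s' : fmap f (fsub s s') = fsub (fmap f s) (fmap f s').
Proof. by rewrite /fsub /fopp fmap_cat fmap_scale rmorphN1. Qed.

Lemma fcoef_fmap (U : seq (n.-tuple A)) s v :
  uniq U -> all (fun p => p.2 \in U) s ->
  fcoef (fmap f s) v = \sum_(w <- U | map_tuple f w == v) f (fcoef s w).
Proof.
move=> uU; elim: s => [|p s IHs] /=.
  by move=> _; rewrite fcoef_nil big1 // => w _; rewrite fcoef_nil rmorph0.
case/andP=> pU sU; rewrite fcoef_cons IHs //.
under eq_bigr do rewrite fcoef_cons rmorphD.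
rewrite big_split /=; congr (_ + _).
rewrite (big_rem _ pU) eqxx /= big1_seq ?addr0 // => w /andP [_].
rewrite mem_rem_uniq // inE => /andP [wp _].
by rewrite eq_sym (negbTE wp) rmorph0.
Qed.

Lemma fmap_null s : omega_null s -> omega_null (fmap f s).
Proof.
elim=> {s} [|s r|s s' _ h1 _ h2|c s _ h|s s' _ h e].
- exact: onull_nil.
- case: r => [w i a b|w i a b|w i j ij e];
    rewrite /fmap !map_cons /= ?map_tset ?rmorphN ?rmorph1.
  + by rewrite rmorphD; apply/onull_rel/orel_add.
  + by rewrite rmorphM; apply/onull_rel/orel_leib.
  + by apply/onull_rel/(orel_alt ij); rewrite !tnth_map e.
- by rewrite fmap_cat; apply: onull_add.
- by rewrite fmap_scale; apply: onull_scale.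
- apply: (onull_ext h) => v.
  have uU := undup_uniq [seq p.2 | p <- s ++ s'].
  have inU (s0 : kform A n) : {subset s0 <= s ++ s'} ->
      all (fun p => p.2 \in undup [seq p.2 | p <- s ++ s']) s0.
    by move=> sub0; apply/allP => p /sub0 ps; rewrite mem_undup map_f.
  rewrite (fcoef_fmap _ uU (inU s _)) ?(fcoef_fmap _ uU (inU s' _)); last 2 first.
  - by move=> p ps; rewrite mem_cat ps orbT.
  - by move=> p ps; rewrite mem_cat ps.
  by apply: eq_bigr => w _; rewrite e.
Qed.

Lemma fmap_eqv s s' : omega_eqv s s' -> omega_eqv (fmap f s) (fmap f s').
Proof. by move/fmap_null; rewrite fmap_sub. Qed.

End Functoriality.

Section EvalAtZero.
Variables (R : comNzRingType) (m : nat).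
Local Notation pi := (\pi_(Rtrunc R m)).
Local Notation ev0 := (@ev0 R m).

Lemma ev0_pi (p : {poly R}) : ev0 (pi p) = p`_0.
Proof.
have /eqP := reprK (pi p); rewrite -Quotient.idealrBE => /forallP /(_ ord0).
by rewrite coefB subr_eq0 => /eqP.
Qed.

Lemma ev0_is_zmod_morphism : zmod_morphism ev0.
Proof. by move=> x y; rewrite -[x]reprK -[y]reprK -rmorphB !ev0_pi coefB. Qed.

Lemma ev0_is_monoid_morphism : monoid_morphism ev0.
Proof.
split; first by rewrite -(rmorph1 pi) ev0_pi coef1.
by move=> x y; rewrite -[x]reprK -[y]reprK -rmorphM !ev0_pi coef0M.
Qed.

End EvalAtZero.

HB.instance Definition _ (R : comNzRingType) (m : nat) :=
  GRing.isZmodMorphism.Build _ _ (@ev0 R m) (@ev0_is_zmod_morphism R m).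
HB.instance Definition _ (R : comNzRingType) (m : nat) :=
  GRing.isMonoidMorphism.Build _ _ (@ev0 R m) (@ev0_is_monoid_morphism R m).
HB.instance Definition _ (R : comNzRingType) (m : nat) :=
  GRing.RMorphism.copy (@incl R m) (\pi_(Rtrunc R m) \o polyC).

Section TruncatedRing.
Variables (R : comNzRingType) (m : nat).
Local Notation A := (Rtrunc R m).
Local Notation pi := (\pi_(Rtrunc R m)).
Local Notation t := (tvar R m).
Local Notation ev := (ev0 R m).
Local Notation inc := (incl R m).

Lemma ev0_incl : cancel inc ev.
Proof. by move=> r; rewrite ev0_pi coefC. Qed.

Lemma ev0_tvarX k : ev (t ^+ k.+1) = 0.
Proof. by rewrite rmorphXn /= ev0_pi coefX expr0n. Qed.

Lemma tvarX_eq0 k : (m < k)%N -> t ^+ k = 0.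
Proof.
move=> mk; apply/eqP; rewrite -rmorphXn -(rmorph0 pi) -Quotient.idealrBE subr0.
by apply/forallP => i; rewrite coefXn ltn_eqF // (leq_trans (ltn_ord i) mk).
Qed.

Lemma tvar_decomp (b : A) : exists b', b = inc (ev b) + t * b'.
Proof.
exists (pi (drop_poly 1 (repr b))).
have take1 : take_poly 1 (repr b) = (ev b)%:P.
  by apply/polyP => i; rewrite coef_take_poly coefC; case: i.
rewrite -[b in LHS]reprK -[repr b in LHS](poly_take_drop 1) take1 mulrC.
by rewrite rmorphD rmorphM expr1.
Qed.

Lemma fmap_ev0_incl n (y : kform R n) : fmap ev (fmap inc y) = y.
Proof.
rewrite /fmap -map_comp -[RHS]map_id; apply: eq_map => -[r w] /=.
rewrite ev0_incl; congr pair; apply: val_inj => /=.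
by rewrite -map_comp map_id_in // => s _ /=; rewrite ev0_incl.
Qed.

End TruncatedRing.

Section Decomposition.
Variables (R : comNzRingType) (m : nat).
Local Notation A := (Rtrunc R m).
Local Notation t := (tvar R m).
Local Notation ev := (ev0 R m).
Local Notation inc := (incl R m).

Definition t_divisible n (y : kform A n) := all (fun p => ev p.1 == 0) y.

Definition d_t_divisible n : kform A n -> Prop :=
  match n with
  | 0 => fun E => E = [::]
  | k.+1 => fun E => exists y : kform A k, t_divisible y /\ E = fd y
  end.

Definition theta_indices n (ws : seq (nat * kform R n)) :=
  all (fun p => (1 <= p.1 <= m)%N) ws.

Definition decomposable n (x : kform A n) := exists y0 ws E,
  [/\ theta_indices ws, d_t_divisible E &
      omega_eqv x (fmap inc y0 ++ theta_map m ws ++ E)].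

Lemma decomposable_eqv n (x x' : kform A n) :
  omega_eqv x x' -> decomposable x' -> decomposable x.
Proof.
move=> xx' [y0 [ws [E [? ? x'E]]]]; exists y0, ws, E; split => //.
exact: omega_eqv_trans xx' x'E.
Qed.

Lemma d_t_divisible_nil n : d_t_divisible ([::] : kform A n).
Proof. by case: n => [|k] //=; exists [::]. Qed.

Lemma decomposable_null n (x : kform A n) : omega_null x -> decomposable x.
Proof.
move=> x0; exists [::], [::], [::]; split => //; first exact: d_t_divisible_nil.
exact: omega_eqv_nil.
Qed.

Lemma d_t_divisible_cat n (E E' : kform A n) :
  d_t_divisible E -> d_t_divisible E' -> d_t_divisible (E ++ E').
Proof.
case: n E E' => [|k] E E' /=; first by move=> -> ->.
move=> [y [y_t ->]] [y' [y'_t ->]]; exists (y ++ y'); split; last by rewrite /fd map_cat.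
by rewrite /t_divisible all_cat; apply/andP.
Qed.

Lemma decomposable_cat n (x x' : kform A n) :
  decomposable x -> decomposable x' -> decomposable (x ++ x').
Proof.
move=> [y0 [ws [E [ws_ind E_d xE]]]] [y0' [ws' [E' [ws'_ind E'_d x'E']]]].
exists (y0 ++ y0'), (ws ++ ws'), (E ++ E'); split.
- by rewrite /theta_indices all_cat; apply/andP.
- exact: d_t_divisible_cat.
apply: omega_eqv_trans (omega_eqv_cat xE x'E') _; apply: omega_eqv_fcoef => w.
rewrite /theta_map fmap_cat map_cat flatten_cat !fcoef_cat; ring.
Qed.

Lemma decomposable_scalar n k c (wR : n.-tuple R) :
  decomposable [:: (t ^+ k * inc c, map_tuple inc wR)].
Proof.
case: k => [|k].
  exists [:: (c, wR)], [::], [::]; split; rewrite ?expr0 ?mul1r //.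
    exact: d_t_divisible_nil.
  exact: omega_eqv_refl.
have [km | mk] := leqP k.+1 m.
  exists [::], [:: (k.+1, [:: (c, wR)])], [::]; split; rewrite /theta_indices /= ?km //.
    exact: d_t_divisible_nil.
  exact: omega_eqv_refl.
by apply: decomposable_null; rewrite tvarX_eq0 // mul0r; apply: omega_coef0.
Qed.

Lemma decomposable_d n a (w : n.-tuple A) : ev a = 0 ->
  decomposable [:: (1, cons_tuple a w)].
Proof.
move=> a0; exists [::], [::], [:: (1, cons_tuple a w)]; split => //.
  by exists [:: (a, w)]; rewrite /t_divisible /= a0 eqxx.
exact: omega_eqv_refl.
Qed.

Hypothesis QR : contains_Q R.

Lemma decomposable_dt n k c (wR : n.-tuple R) :
  decomposable [:: (t ^+ k * inc c, cons_tuple t (map_tuple inc wR))].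
Proof.
have [y ky1] := QR k.
have ky1' : k.+1%:R * inc y = 1 by rewrite -(rmorph_nat inc) -rmorphM ky1 rmorph1.
apply: decomposable_eqv (omega_integrate_dt _ _ _ ky1') _.
rewrite -!rmorphN -!map_cons_tuple.
apply: (decomposable_cat (x := [:: _])).
  by apply: decomposable_d; rewrite !rmorphM /= ev0_incl ev0_tvarX !mulr0.
by apply: (decomposable_cat (x := [:: _])); apply: decomposable_scalar.
Qed.

Definition scalar_slot (x : A) := inc (ev x) == x.

Lemma decomposable_dt_at n k c (w : n.+1.-tuple A) j : tnth w j = t ->
  (forall i, i != j -> scalar_slot (tnth w i)) ->
  decomposable [:: (t ^+ k * inc c, w)].
Proof.
move=> wj scal_w.
wlog j0 : j c w wj scal_w / j = ord0.
  move=> base; have [j0 | j0] := eqVneq j ord0; first exact: base wj scal_w j0.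
  apply: decomposable_eqv (omega_swap _ _ j0) _.
  rewrite -mulrN -rmorphN; apply: (base ord0) => // [|i i0]; rewrite /tswap !tnth_tset.
    by rewrite eqxx.
  rewrite (negbTE i0); case: eqP => [_ | /eqP ij]; last exact: scal_w.
  by apply: scal_w; rewrite eq_sym.
subst j.
have -> : w = cons_tuple t (map_tuple inc [tuple ev (tnth w (lift ord0 i)) | i < n]).
  apply: eq_from_tnth => i; case: (unliftP ord0 i) => [i' ->|->]; last by rewrite tnth0.
  rewrite tnthS tnth_map tnth_mktuple; apply/esym/eqP.
  by apply: scal_w; rewrite eq_sym neq_lift.
exact: decomposable_dt.
Qed.

Definition simple_slot (x : A) := (x == t) || scalar_slot x.

Lemma decomposable_simple n k c (w : n.-tuple A) :
  (forall i, simple_slot (tnth w i)) -> decomposable [:: (t ^+ k * inc c, w)].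
Proof.
move=> simple_w.
have [j /eqP wj | no_t] := pickP (fun j => tnth w j == t); last first.
  have -> : w = map_tuple inc (map_tuple ev w).
    apply: eq_from_tnth => i; rewrite !tnth_map.
    by have := simple_w i; rewrite /simple_slot no_t => /eqP.
  exact: decomposable_scalar.
have [i /andP [ij /eqP wi] | one_t] := pickP (fun i => (i != j) && (tnth w i == t)).
  by apply/decomposable_null/(omega_alt _ ij); rewrite wi wj.
case: n w simple_w j wj one_t => [|n] w simple_w j; first by case: j.
move=> wj one_t.
apply: (decomposable_dt_at _ _ wj) => i ij.
by have := simple_w i; have := one_t i; rewrite ij /simple_slot => /= ->.
Qed.

Definition nonsimple_slots n (w : n.-tuple A) := [set i | ~~ simple_slot (tnth w i)].

Lemma nonsimple_slots_tset n (w : n.-tuple A) j x :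
  simple_slot x -> j \in nonsimple_slots w ->
  (#|nonsimple_slots (tset w j x)| < #|nonsimple_slots w|)%N.
Proof.
move=> x_simple wj; apply/proper_card/properP; split.
  by apply/subsetP => i; rewrite !inE tnth_tset; case: eqP => // _; rewrite x_simple.
by exists j; rewrite // inE tnth_tset eqxx x_simple.
Qed.

Definition decomposable_at n k := forall a (w : n.-tuple A),
  decomposable [:: (t ^+ k * a, w)].

Lemma decomposable_simple_at n k a (w : n.-tuple A) : decomposable_at n k.+1 ->
  (forall i, simple_slot (tnth w i)) -> decomposable [:: (t ^+ k * a, w)].
Proof.
move=> dec_k1 simple_w; have [a' ea] := tvar_decomp a.
apply: (@decomposable_eqv _ _ ([:: (t ^+ k * inc (ev a), w)] ++ [:: (t ^+ k.+1 * a', w)])).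
  by apply: omega_eqv_fcoef => v; rewrite {1}ea exprS; fcoef_ring.
by apply: decomposable_cat; [apply: decomposable_simple | apply: dec_k1].
Qed.

(* Induction on the number of non-simple slots: [d(r + t b) = dr + b dt + t db]. *)
Lemma decomposable_at_pred n k : decomposable_at n k.+1 -> decomposable_at n k.
Proof.
move=> dec_k1 a w; have [N] := ubnP #|nonsimple_slots w|.
elim: N a w => // N IHN a w /ltnSE small_w.
have [/setP all_simple | [j wj]] := set_0Vmem (nonsimple_slots w).
  apply: decomposable_simple_at => // i; apply/negPn.
  by have := all_simple i; rewrite !inE => ->.
have [b eb] := tvar_decomp (tnth w j).
set C := t ^+ k * a.
have add_j := omega_add C w j (inc (ev (tnth w j))) (t * b).
have leib_j := omega_leibniz C w j t b.
rewrite -eb tset_tnth in add_j.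
apply: (@decomposable_eqv _ _ ([:: (C, tset w j (inc (ev (tnth w j))))] ++
   [:: (t ^+ k * (a * b), tset w j t)] ++ [:: (t ^+ k.+1 * a, tset w j b)])).
  apply: (omega_null_lin2 (c1 := 1) (c2 := 1) add_j leib_j) => v.
  by rewrite /C exprS; fcoef_ring.
have fewer x : simple_slot x -> (#|nonsimple_slots (tset w j x)| < N)%N.
  by move=> x_simple; apply: leq_trans (nonsimple_slots_tset x_simple wj) small_w.
apply: decomposable_cat; last apply: decomposable_cat.
- by apply/IHN/fewer; rewrite /simple_slot /scalar_slot ev0_incl eqxx orbT.
- by apply/IHN/fewer; rewrite /simple_slot eqxx.
- exact: dec_k1.
Qed.

Lemma decomposable_at_all n k : decomposable_at n k.
Proof.
have [d] := ubnP (m.+1 - k); elim: d k => // d IHd k.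
have [mk _ | km small_k] := ltnP m k.
  by move=> a w; apply: decomposable_null; rewrite tvarX_eq0 // mul0r; apply: omega_coef0.
by apply/decomposable_at_pred/IHd; move: small_k; rewrite subSn // ltnS subSS.
Qed.

Lemma decomposable_all n (x : kform A n) : decomposable x.
Proof.
elim: x => [|[a w] x IHx]; first exact/decomposable_null/onull_nil.
apply: (decomposable_cat (x := [:: (a, w)])) => //.
by have := decomposable_at_all 0 a w; rewrite expr0 mul1r.
Qed.

End Decomposition.

Section Tilde.
Variables (R : comNzRingType) (m n : nat).
Local Notation A := (Rtrunc R m).
Local Notation ev := (ev0 R m).
Local Notation inc := (incl R m).
Implicit Types (x z E : kform A n).

Lemma in_tilde_cat x z : in_tilde x -> in_tilde z -> in_tilde (x ++ z).
Proof. by rewrite /in_tilde fmap_cat; apply: onull_add. Qed.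

Lemma t_divisible_tilde k (y : kform A k) : t_divisible y -> in_tilde y.
Proof.
move=> /allP y_t; apply: omega_null_fcoef0 => w; rewrite /fcoef big1_seq // => q /andP [_].
by case/mapP => p /y_t /eqP p0 ->.
Qed.

Lemma theta_map_tilde (ws : seq (nat * kform R n)) :
  theta_indices m ws -> in_tilde (theta_map m ws).
Proof.
move=> ws_ind; apply: t_divisible_tilde; apply/allP => q.
case/flatten_mapP => -[[|i] s] /(allP ws_ind) //= _ /mapP [p _ ->] /=.
by rewrite rmorphM /= ev0_tvarX mul0r.
Qed.

Lemma d_t_divisible_tilde E : d_t_divisible E -> in_tilde E.
Proof.
case: n E => [|k] E /=; first by move->; apply: onull_nil.
case=> y [/allP y_t ->]; elim: y y_t => [|p y IHy] y_t; first exact: onull_nil.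
apply: (onull_add (s := [:: _])).
  rewrite /= map_cons_tuple rmorph1 (eqP (y_t p (mem_head _ _))).
  by have := omega_d0 1 (cons_tuple 0 (map_tuple ev p.2)) ord0; rewrite tset_cons.
by apply: IHy => q yq; apply: y_t; rewrite inE yq orbT.
Qed.

Lemma tilde_incl_null x z (y0 : kform R n) :
  in_tilde x -> in_tilde z -> omega_eqv x (fmap inc y0 ++ z) -> omega_null y0.
Proof.
move=> x_t z_t /(fmap_eqv (ev0 R m)); rewrite fmap_cat fmap_ev0_incl => xy0z.
apply: (omega_null_lin3 (c1 := -1) (c2 := 1) (c3 := -1) xy0z x_t z_t) => w.
by fcoef_ring.
Qed.

Lemma in_dtilde_eqv z E : d_t_divisible E -> omega_eqv z E -> in_dtilde z.
Proof.
case: n z E => [|k] z E /=; first by move=> -> /omega_eqv_null; apply; apply: onull_nil.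
by case=> y [y_t ->] zy; exists y; split => //; apply: t_divisible_tilde.
Qed.

End Tilde.

Theorem lemma8p3 (R : comNzRingType) (m n : nat) :
  semilocal R -> contains_Q R -> (1 <= m)%N ->
  forall x : kform (Rtrunc R m) n, in_tilde x ->
  exists ws : seq (nat * kform R n),
    all (fun p => (1 <= p.1 <= m)%N) ws /\ in_dtilde (fsub x (theta_map m ws)).
Proof.
move=> _ QR _ x x_tilde.
have [y0 [ws [E [ws_ind E_d xE]]]] := decomposable_all QR x.
exists ws; split => //; apply: (in_dtilde_eqv E_d).
have y0_null : omega_null y0.
  apply: tilde_incl_null x_tilde _ xE.
  by apply: in_tilde_cat; [apply: theta_map_tilde | apply: d_t_divisible_tilde].
apply: (omega_null_lin2 (c1 := 1) (c2 := 1) xE (fmap_null (incl R m) y0_null)) => w.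
by fcoef_ring.
Qed.
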